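(* Let $R$ be a reflexive relation on a set $U$ such that $\mathrm{DM(RS)}$ is completely distributive and spatial. The following are equivalent: (i) $\mathrm{DM(RS)}$ forms a Nelson algebra (with the operations described in the context); (ii) for all $x,y\in U\setminus\mathcal S$ such that $\{x\}^{\blacktriangle}$ and $\{y\}^{\blacktriangle}$ are completely join-irreducible in $\wp(U)^{\blacktriangle}$: if $\{x\}^{\blacktriangle},\{y\}^{\blacktriangle}\subseteq\{u\}^{\blacktriangle}$ for some $u\in U$, then there exists $z\in U$ such that $\{z\}^{\blacktriangle}$ is completely join-irreducible in $\wp(U)^{\blacktriangle}$ and $\{x\}^{\blacktriangle},\{y\}^{\blacktriangle}\subseteq\{z\}^{\blacktriangle}$.
   Context: Let $U$ be a set and $R\subseteq U\times U$ a binary relation. For $x\in U$, $R(x)=\{y\in U\mid (x,y)\in R\}$ and $\breve R(x)=\{y\in U\mid (y,x)\in R\}$ ($\breve R$ is the inverse relation). For $X\subseteq U$: $X^{\blacktriangledown}=\{x\in U\mid R(x)\subseteq X\}$, $X^{\blacktriangle}=\{x\in U\mid R(x)\cap X\neq\emptyset\}$, $X^{\triangledown}=\{x\in U\mid \breve R(x)\subseteq X\}$, $X^{\vartriangle}=\{x\in U\mid \breve R(x)\cap X\neq\emptyset\}$; thus $\{x\}^{\vartriangle}=R(x)$ and $\{x\}^{\blacktriangle}=\breve R(x)$, and composites such as $X^{\vartriangle\blacktriangledown}$ mean $(X^{\vartriangle})^{\blacktriangledown}$. Put $\wp(U)^{\blacktriangledown}=\{X^{\blacktriangledown}\mid X\subseteq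 U\}$ and similarly $\wp(U)^{\blacktriangle},\wp(U)^{\triangledown},\wp(U)^{\vartriangle}$; each is a complete lattice under $\subseteq$ (in $\wp(U)^{\blacktriangle}$ and $\wp(U)^{\vartriangle}$ joins are unions). The set of singletons is $\mathcal S=\{x\in U\mid |R(x)|=1\}$. $\mathrm{RS}=\{(X^{\blacktriangledown},X^{\blacktriangle})\mid X\subseteq U\}$ is ordered coordinatewise by inclusion, and $\mathrm{DM(RS)}$ is its Dedekind–MacNeille completion, which is (identified with) $\{(A,B)\in\wp(U)^{\blacktriangledown}\times\wp(U)^{\blacktriangle}\mid A^{\vartriangle\blacktriangle}\subseteq B,\ A\cap\mathcal S=B\cap\mathcal S\}$ ordered coordinatewise, with arbitrary meets $\bigwedge_i(X_i,Y_i)=(\bigcap_iX_i,(\bigcap_iY_i)^{\triangledown\blacktriangle})$ and joins $\bigvee_i(X_i,Y_i)=((\bigcup_iX_i)^{\vartriangle\blacktriangledown},\bigcup_iY_i)$. An element $j$ of a complete lattice $L$ is completely join-irreducible if $j=\bigvee S$ implies $j\in S$ for all $S\subseteq L$ (the least element is not completely join-irreducible). $L$ is spatial if each element is the join of the completely join-irreducible elements below it. For reflexive $R$ with $\mathrm{DM(RS)}$ distributive, $\mathrm{DM(RS)}$ is a Kleene algebra with $\sim(A,B)=(B^c,A^c)$ ($^c$ = complement in $U$), bottom $(\emptyset,\emptyset)$ and top $(U,U)$. A Kleene algebra is a bounded distributive lattice with an operation $\sim$ satisfying $\sim\sim x=x$, $\sim(x\vee y)=\sim x\wedge\sim y$,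 $\sim(x\wedge y)=\sim x\vee\sim y$ and $x\wedge\sim x\le y\vee\sim y$. A Nelson algebra is a Kleene algebra in which for all $a,b$ the element $a\to b:=a\Rightarrow(\sim a\vee b)$ exists ($\Rightarrow$ the relative pseudocomplement: $a\Rightarrow c$ is the greatest $x$ with $a\wedge x\le c$) and $(a\wedge b)\to c=a\to(b\to c)$ for all $a,b,c$. ''$\mathrm{DM(RS)}$ forms a Nelson algebra'' means that the Kleene algebra $(\mathrm{DM(RS)},\vee,\wedge,\sim,(\emptyset,\emptyset),(U,U))$ with this $\to$ is a Nelson algebra. *)

From HB Require Import structures.
From mathcomp Require Import all_boot.
From mathcomp Require Export boolp classical_sets.
Set Implicit Arguments. Unset Strict Implicit. Unset Printing Implicit Defensive.
Local Open Scope classical_set_scope.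

Definition Rimg (U : Type) (R : U -> U -> Prop) (x : U) : set U := [set y | R x y].
Definition Rinv (U : Type) (R : U -> U -> Prop) (x : U) : set U := [set y | R y x].

(* X^{black down}  = {x | R(x) ⊆ X} *)
Definition ubox (U : Type) (R : U -> U -> Prop) (X : set U) : set U :=
  [set x | Rimg R x `<=` X].
(* X^{black up}    = {x | R(x) ∩ X ≠ ∅} *)
Definition udia (U : Type) (R : U -> U -> Prop) (X : set U) : set U :=
  [set x | Rimg R x `&` X !=set0].
(* X^{white down}  = {x | R˘(x) ⊆ X} *)
Definition ibox (U : Type) (R : U -> U -> Prop) (X : set U) : set U :=
  [set x | Rinv R x `<=` X].
(* X^{white up}    = {x | R˘(x) ∩ X ≠ ∅} *)
Definition idia (U : Type) (R : U -> U -> Prop) (X : set U) : set U :=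
  [set x | Rinv R x `&` X !=set0].

Definition singletons (U : Type) (R : U -> U -> Prop) : set U :=
  [set x | exists y, Rimg R x = [set y]].

Definition DMRS (U : Type) (R : U -> U -> Prop) : set (set U * set U) :=
  [set p | range (ubox R) p.1 /\ range (udia R) p.2 /\
           udia R (idia R p.1) `<=` p.2 /\
           p.1 `&` singletons R = p.2 `&` singletons R].

Definition pair_le (U : Type) (p q : set U * set U) : Prop :=
  p.1 `<=` q.1 /\ p.2 `<=` q.2.

Definition dm_join (U : Type) (R : U -> U -> Prop) (p q : set U * set U) :=
  (ubox R (idia R (p.1 `|` q.1)), p.2 `|` q.2).
Definition dm_meet (U : Type) (R : U -> U -> Prop) (p q : set U * set U) :=
  (p.1 `&` q.1, udia R (ibox R (p.2 `&` q.2))).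
Definition dm_neg (U : Type) (p : set U * set U) : set U * set U :=
  (~` p.2, ~` p.1).
Definition dm_bot (U : Type) : set U * set U := (set0, set0).
Definition dm_top (U : Type) : set U * set U := (setT, setT).

Definition is_ub (T : Type) (le : T -> T -> Prop) (S : set T) (u : T) :=
  forall s, S s -> le s u.
Definition is_lb (T : Type) (le : T -> T -> Prop) (S : set T) (u : T) :=
  forall s, S s -> le u s.
Definition is_lub (T : Type) (L : set T) (le : T -> T -> Prop) (S : set T) (j : T) :=
  L j /\ is_ub le S j /\ forall u, L u -> is_ub le S u -> le j u.
Definition is_glb (T : Type) (L : set T) (le : T -> T -> Prop) (S : set T) (j : T) :=
  L j /\ is_lb le S j /\ forall u, L u -> is_lb le S u -> le u j.

Definition cji (T : Type) (L : set T) (le : T -> T -> Prop) (j : T) :=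
  L j /\ forall S : set T, S `<=` L -> is_lub L le S j -> S j.

Definition spatial (T : Type) (L : set T) (le : T -> T -> Prop) :=
  forall a, L a -> is_lub L le [set j | cji L le j /\ le j a] a.

(* complete distributivity:
   /\_i \/_{k in K i} x i k = \/_{f in prod_i K i} /\_i x i (f i) *)
Definition completely_distributive (T : Type) (L : set T) (le : T -> T -> Prop) :=
  forall (I : Type) (K : I -> Type) (x : forall i, K i -> T)
         (y : I -> T) (a : T) (z : (forall i, K i) -> T) (b : T),
    (forall i k, L (x i k)) ->
    (forall i, is_lub L le [set t | exists k, t = x i k] (y i)) ->
    is_glb L le [set t | exists i, t = y i] a ->
    (forall f, is_glb L le [set t | exists i, t = x i (f i)] (z f)) ->
    is_lub L le [set t | exists f, t = z f] b ->
    a = b.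

Definition is_Kleene_DM (U : Type) (R : U -> U -> Prop) : Prop :=
  let L := DMRS R in
  let le := @pair_le U in
  let j := dm_join R in let m := dm_meet R in let n := @dm_neg U in
  L (dm_bot U) /\ L (dm_top U) /\
  (forall a, L a -> le (dm_bot U) a /\ le a (dm_top U)) /\
  (forall a b, L a -> L b -> is_lub L le [set a; b] (j a b)) /\
  (forall a b, L a -> L b -> is_glb L le [set a; b] (m a b)) /\
  (forall a b c, L a -> L b -> L c -> m a (j b c) = j (m a b) (m a c)) /\
  (forall a, L a -> L (n a)) /\
  (forall a, L a -> n (n a) = a) /\
  (forall a b, L a -> L b -> n (j a b) = m (n a) (n b)) /\
  (forall a b, L a -> L b -> n (m a b) = j (n a) (n b)) /\
  (forall a b, L a -> L b -> le (m a (n a)) (j b (n b))).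

Definition is_rpc (U : Type) (R : U -> U -> Prop) (a c x : set U * set U) : Prop :=
  DMRS R x /\ pair_le (dm_meet R a x) c /\
  forall y, DMRS R y -> pair_le (dm_meet R a y) c -> pair_le y x.

(* a -> b := a => (~a \/ b) exists for all a b, and (a/\b) -> c = a -> (b -> c) *)
Definition is_Nelson_DM (U : Type) (R : U -> U -> Prop) : Prop :=
  is_Kleene_DM R /\
  (forall a b, DMRS R a -> DMRS R b ->
     exists x, is_rpc R a (dm_join R (dm_neg a) b) x) /\
  (forall a b c u v w, DMRS R a -> DMRS R b -> DMRS R c ->
     is_rpc R (dm_meet R a b) (dm_join R (dm_neg (dm_meet R a b)) c) u ->
     is_rpc R b (dm_join R (dm_neg b) c) v ->
     is_rpc R a (dm_join R (dm_neg a) v) w ->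
     u = w).

(* Under complete distributivity every completely join-irreducible element j of DM(RS)
   is completely join-prime: j <= \/F forces j <= f for some f in F.  These generators are
   exactly the pairs (R(x)^▼, R(x)^▲) and ({z}^▼, {z}^▲) with {z}^▲ completely
   join-irreducible in ℘(U)^▲, and spatiality lets every inequality be tested on them.
   Hence DM(RS) is a Kleene algebra with relative pseudocomplements
   a => c = \/{y | a /\ y <= c}, and the inequality (a /\ b) -> c <= a -> (b -> c) of the
   Nelson identity comes down to this: a generator k2 below b and ~a but not ~b, lying under a
   generator k <= a not below ~a, must lie under a generator k' <= k avoiding ~a and ~b.
   Condition (ii), applied to the point describing k2 and a point below k with a common
   upper bound, supplies k' = ({z}^▼, {z}^▲).
   Conversely, if (ii) fails for x and y, pick predecessors v_x of x and v_y of y with minimal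
   R-images (they exist by join-primeness); for a = (R(v_y)^▼, R(v_y)^▲),
   b = (R(v_x)^▼, R(v_x)^▲) and c = 0 the Nelson identity forces a <= b -> 0, which
   ({x}^▼, {x}^▲) refutes. *)

From mathcomp Require Import all_boot boolp classical_sets.
Set Implicit Arguments. Unset Strict Implicit. Unset Printing Implicit Defensive.
Local Open Scope classical_set_scope.

Lemma pair_le_refl (T : Type) (p : set T * set T) : pair_le p p.
Proof. by split. Qed.

Lemma pair_le_trans (T : Type) (p q r : set T * set T) :
  pair_le p q -> pair_le q r -> pair_le p r.
Proof. by move=> [pq1 pq2] [qr1 qr2]; split => t; [move/pq1/qr1 | move/pq2/qr2]. Qed.

Lemma pair_le_anti (T : Type) (p q : set T * set T) :
  pair_le p q -> pair_le q p -> p = q.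
Proof.
case: p q => [A B] [C D] [/= AC BD] [/= CA DB].
by congr (_, _); apply/seteqP; split.
Qed.

Lemma is_lub_unique (T : Type) (L : set T) (le : T -> T -> Prop) (S : set T) (m m' : T) :
  (forall p q, le p q -> le q p -> p = q) ->
  is_lub L le S m -> is_lub L le S m' -> m = m'.
Proof.
move=> anti [Lm [m_ub m_least]] [Lm' [m'_ub m'_least]].
by apply: anti; [apply: m_least | apply: m'_least].
Qed.

Section RoughOperators.
Variables (U : Type) (R : U -> U -> Prop).

Lemma ubox_mono (X Y : set U) : X `<=` Y -> ubox R X `<=` ubox R Y.
Proof. by move=> XY x Xx y /Xx /XY. Qed.

Lemma udia_mono (X Y : set U) : X `<=` Y -> udia R X `<=` udia R Y.
Proof. by move=> XY x [y [xy /XY Yy]]; exists y. Qed.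

Lemma ibox_mono (X Y : set U) : X `<=` Y -> ibox R X `<=` ibox R Y.
Proof. by move=> XY x Xx y /Xx /XY. Qed.

Lemma idia_mono (X Y : set U) : X `<=` Y -> idia R X `<=` idia R Y.
Proof. by move=> XY x [y [yx /XY Yy]]; exists y. Qed.

Lemma idia_ubox_subset (X : set U) : idia R (ubox R X) `<=` X.
Proof. by move=> x [y [yx /(_ x yx)]]. Qed.

Lemma subset_ubox_idia (X : set U) : X `<=` ubox R (idia R X).
Proof. by move=> x Xx y xy; exists x. Qed.

Lemma udia_ibox_subset (X : set U) : udia R (ibox R X) `<=` X.
Proof. by move=> x [y [xy /(_ x xy)]]. Qed.

Lemma subset_ibox_udia (X : set U) : X `<=` ibox R (udia R X).
Proof. by move=> x Xx y yx; exists x. Qed.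

Lemma udia_subset_ibox (X Y : set U) : udia R X `<=` Y -> X `<=` ibox R Y.
Proof. by move=> XY x Xx y yx; apply: XY; exists x. Qed.

Lemma ubox_idia_range (A : set U) : range (ubox R) A -> ubox R (idia R A) = A.
Proof.
move=> [X _ <-]; apply/seteqP; split; last exact: subset_ubox_idia.
by apply: ubox_mono; apply: idia_ubox_subset.
Qed.

Lemma udia_ibox_range (B : set U) : range (udia R) B -> udia R (ibox R B) = B.
Proof.
move=> [X _ <-]; apply/seteqP; split; first exact: udia_ibox_subset.
by apply: udia_mono; apply: subset_ibox_udia.
Qed.

Lemma setC_ubox (X : set U) : ~` ubox R X = udia R (~` X).
Proof.
apply/seteqP; split => x /=; last by move=> [y [xy nXy]] /(_ y xy).
move=> nX; apply: contrapT => nd; apply: nX => y xy.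
by apply: contrapT => nXy; apply: nd; exists y.
Qed.

Lemma setC_udia (X : set U) : ~` udia R X = ubox R (~` X).
Proof.
apply/seteqP; split => x /=; first by move=> nd y xy Xy; apply: nd; exists y.
by move=> bx [y [xy]]; apply: bx.
Qed.

Lemma setC_ibox (X : set U) : ~` ibox R X = idia R (~` X).
Proof.
apply/seteqP; split => x /=; last by move=> [y [yx nXy]] /(_ y yx).
move=> nX; apply: contrapT => nd; apply: nX => y yx.
by apply: contrapT => nXy; apply: nd; exists y.
Qed.

Lemma setC_idia (X : set U) : ~` idia R X = ibox R (~` X).
Proof.
apply/seteqP; split => x /=; first by move=> nd y yx Xy; apply: nd; exists y.
by move=> bx [y [yx]]; apply: bx.
Qed.

Lemma udia_set1 (z w : U) : udia R [set z] w <-> R w z.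
Proof. by split => [[y [wy /= <-]] | wz] //; exists z. Qed.

Lemma dm_neg_join (a b : set U * set U) :
  dm_neg (dm_join R a b) = dm_meet R (dm_neg a) (dm_neg b).
Proof. by rewrite /dm_neg /dm_join /dm_meet /= setCU setC_ubox setC_idia setCU. Qed.

Lemma dm_neg_meet (a b : set U * set U) :
  dm_neg (dm_meet R a b) = dm_join R (dm_neg a) (dm_neg b).
Proof. by rewrite /dm_neg /dm_join /dm_meet /= setCI setC_udia setC_ibox setCI. Qed.

Lemma dm_negK (p : set U * set U) : dm_neg (dm_neg p) = p.
Proof. by case: p => A B; rewrite /dm_neg /= !setCK. Qed.

Lemma dm_neg_le (p q : set U * set U) : pair_le p q -> pair_le (dm_neg q) (dm_neg p).
Proof. by move=> [pq1 pq2]; split => x /= nq Pp; apply: nq; [apply: pq2 | apply: pq1]. Qed.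

End RoughOperators.

Section Reflexive.
Variables (U : Type) (R : U -> U -> Prop).
Hypothesis Rrefl : forall x, R x x.

Lemma ubox_subset (X : set U) : ubox R X `<=` X.
Proof. by move=> x /(_ x (Rrefl x)). Qed.

Lemma subset_udia (X : set U) : X `<=` udia R X.
Proof. by move=> x Xx; exists x; split => //; apply: Rrefl. Qed.

Lemma ibox_subset (X : set U) : ibox R X `<=` X.
Proof. by move=> x /(_ x (Rrefl x)). Qed.

Lemma subset_idia (X : set U) : X `<=` idia R X.
Proof. by move=> x Xx; exists x; split => //; apply: Rrefl. Qed.

Lemma singletons_eq (x y : U) : singletons R x -> R x y -> y = x.
Proof.
move=> [z xz] xy; have : Rimg R x x by exact: Rrefl.
by have : Rimg R x y by []; rewrite xz => /= -> ->.
Qed.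

Lemma ubox_set1 (z t : U) : ubox R [set z] t -> t = z /\ singletons R z.
Proof.
move=> zt; have tz : t = z by exact: zt t (Rrefl t).
split => //; subst t; exists z; apply/seteqP; split => [y /zt // | y /= ->].
exact: Rrefl.
Qed.

Lemma ubox_set1_self (z : U) : singletons R z -> ubox R [set z] z.
Proof. by move=> Sz y /(singletons_eq Sz). Qed.

Lemma udia_set1_self (z : U) : udia R [set z] z.
Proof. by apply/udia_set1; apply: Rrefl. Qed.

Lemma ubox_set1_eq0 (z : U) : ~ singletons R z -> ubox R [set z] = set0.
Proof. by move=> nSz; apply/seteqP; split => // t /ubox_set1 []. Qed.

Lemma dm_fst_subset_snd (p : set U * set U) : DMRS R p -> p.1 `<=` p.2.
Proof. by move=> [_ [_ [p12 _]]] x /subset_idia /subset_udia /p12. Qed.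

Lemma dm_singleton_fst (p : set U * set U) (x : U) :
  DMRS R p -> singletons R x -> p.2 x -> p.1 x.
Proof.
move=> [_ [_ [_ pS]]] Sx p2x.
by have : (p.2 `&` singletons R) x by []; rewrite -pS => -[].
Qed.

Lemma DMRS_intro (A B : set U) :
  range (ubox R) A -> range (udia R) B -> udia R (idia R A) `<=` B ->
  (forall x, singletons R x -> B x -> A x) -> DMRS R (A, B).
Proof.
move=> rA rB AB BA; do 3 split => //=.
apply/seteqP; split => x [Ax Sx]; split => //.
  exact/AB/subset_udia/subset_idia.
exact: BA.
Qed.

Definition rs (X : set U) : set U * set U := (ubox R X, udia R X).

Lemma DMRS_rs (X : set U) : DMRS R (rs X).
Proof.
apply: DMRS_intro; [exact: imageT | exact: imageT | |].
  by apply: udia_mono; apply: idia_ubox_subset.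
move=> x Sx [y [xy Xy]] s xs.
by rewrite (singletons_eq Sx xs) -(singletons_eq Sx xy).
Qed.

Lemma rs_img_self (x : U) : (rs (Rimg R x)).1 x.
Proof. by move=> y. Qed.

Lemma rs_img_le (p : set U * set U) (x : U) :
  DMRS R p -> pair_le (rs (Rimg R x)) p <-> p.1 x.
Proof.
move=> pL; have [rp1 [_ [p12 _]]] := pL.
split => [[+ _] | p1x]; first by apply; apply: rs_img_self.
split => /=; first by rewrite -(ubox_idia_range rp1); apply: ubox_mono => y xy; exists x.
by move=> y [t [yt xt]]; apply: p12; exists t; split => //; exists x.
Qed.

Lemma DMRS_neg (p : set U * set U) : DMRS R p -> DMRS R (dm_neg p).
Proof.
move=> pL; have [[X _ eA] [[Y _ eB] [p12 _]]] := pL.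
apply: DMRS_intro => /=.
- by exists (~` Y) => //; rewrite -setC_udia eB.
- by exists (~` X) => //; rewrite -setC_ubox eA.
- move=> x [y [xy [w [wy nw]]]] p1x; apply: nw; apply: p12.
  by exists y; split => //; exists x.
- by move=> x Sx np2 /(dm_singleton_fst pL Sx).
Qed.

Lemma dm_not_le_neg (p : set U * set U) (x : U) : DMRS R p -> p.1 x -> ~ pair_le p (dm_neg p).
Proof.
move=> pL p1x [/(_ _ p1x) np2x _].
by apply: np2x; apply: dm_fst_subset_snd pL _ p1x.
Qed.

Lemma DMRS_bot : DMRS R (dm_bot U).
Proof.
apply: DMRS_intro => //=.
- by exists set0 => //; apply/seteqP; split => // x /ubox_subset.
- by exists set0 => //; apply/seteqP; split => // x [y [_ []]].
- by move=> x [y [_ [w [_ []]]]].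
Qed.

Lemma DMRS_top : DMRS R (dm_top U).
Proof.
apply: DMRS_intro => //=.
- by exists setT => //; apply/seteqP; split.
- by exists setT => //; apply/seteqP; split => // x _; exists x; split => //; apply: Rrefl.
Qed.

Lemma range_udia_bigcup (I : Type) (F : set I) (B : I -> set U) :
  (forall i, F i -> range (udia R) (B i)) -> range (udia R) (\bigcup_(i in F) B i).
Proof.
move=> rB; exists (ibox R (\bigcup_(i in F) B i)) => //.
apply/seteqP; split; first exact: udia_ibox_subset.
move=> x [i Fi]; rewrite -(udia_ibox_range (rB i Fi)).
by apply: udia_mono; apply: ibox_mono => y; exists i.
Qed.

Lemma is_lub_range_udia (T : set (set U)) (X : set U) :
  T `<=` range (udia R) -> is_lub (range (udia R)) (@subset U) T X ->
  X = \bigcup_(Y in T) Y.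
Proof.
move=> Tr [_ [X_ub X_least]]; apply/seteqP; split; last by move=> x [Y TY]; apply: X_ub.
by apply: X_least; [exact: range_udia_bigcup | move=> Y TY x Yx; exists Y].
Qed.

Definition dm_sup (F : set (set U * set U)) : set U * set U :=
  (ubox R (idia R (\bigcup_(p in F) p.1)), \bigcup_(p in F) p.2).

Lemma DMRS_sup (F : set (set U * set U)) : F `<=` DMRS R -> DMRS R (dm_sup F).
Proof.
move=> FL; apply: DMRS_intro; [exact: imageT | | |].
- by apply: range_udia_bigcup => p /FL [_ [? _]].
- move=> x [y [xy /= yI]]; have [w [wy [p Fp p1w]]] := idia_ubox_subset yI; exists p => //.
  by have [_ [_ [p12 _]]] := FL p Fp; apply: p12; exists y; split => //; exists w.
- move=> x Sx [p Fp p2x]; apply: subset_ubox_idia.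
  by exists p => //; apply: dm_singleton_fst Sx p2x; apply: FL.
Qed.

Lemma dm_sup_lub (F : set (set U * set U)) :
  F `<=` DMRS R -> is_lub (DMRS R) (@pair_le U) F (dm_sup F).
Proof.
move=> FL; split; first exact: DMRS_sup.
split => [p Fp | u uL u_ub]; first by split => x px; [apply: subset_ubox_idia|]; exists p.
split => x /=; last by move=> [p Fp]; apply: (u_ub p Fp).2.
rewrite -(ubox_idia_range uL.1); apply: ubox_mono; apply: idia_mono.
by move=> y [p Fp]; apply: (u_ub p Fp).1.
Qed.

Lemma is_lub_dm_sup (F : set (set U * set U)) (m : set U * set U) :
  F `<=` DMRS R -> is_lub (DMRS R) (@pair_le U) F m -> m = dm_sup F.
Proof.
by move=> FL m_lub; apply: is_lub_unique m_lub (dm_sup_lub FL); apply: pair_le_anti.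
Qed.

Lemma dm_join_sup (a b : set U * set U) : dm_join R a b = dm_sup [set a; b].
Proof. by rewrite /dm_join /dm_sup !bigcup_setU !bigcup_set1. Qed.

Lemma DMRS_set2 (a b : set U * set U) : DMRS R a -> DMRS R b -> [set a; b] `<=` DMRS R.
Proof. by move=> aL bL p [->|->]. Qed.

Section BinaryJoinMeet.
Variables a b : set U * set U.
Hypotheses (aL : DMRS R a) (bL : DMRS R b).

Lemma dm_join_lub : is_lub (DMRS R) (@pair_le U) [set a; b] (dm_join R a b).
Proof. by rewrite dm_join_sup; apply: dm_sup_lub; apply: DMRS_set2. Qed.

Lemma DMRS_join : DMRS R (dm_join R a b).
Proof. by case: dm_join_lub. Qed.

Lemma dm_join_ubl : pair_le a (dm_join R a b).
Proof. by case: dm_join_lub => _ [+ _]; apply; left. Qed.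

Lemma dm_join_ubr : pair_le b (dm_join R a b).
Proof. by case: dm_join_lub => _ [+ _]; apply; right. Qed.

Lemma dm_meet_glb : is_glb (DMRS R) (@pair_le U) [set a; b] (dm_meet R a b).
Proof.
have [[X _ eA] [_ [a12 _]]] := aL; have [[X' _ eA'] [_ [b12 _]]] := bL.
split.
  apply: DMRS_intro.
  - exists (X `&` X') => //; rewrite -eA -eA'; apply/seteqP; split => x /=.
      by move=> Ix; split => y /Ix [].
    by move=> [aX bX] y xy; split; [apply: aX | apply: bX].
  - exact: imageT.
  - apply: udia_mono; apply: udia_subset_ibox => x Ix; split.
      by apply: a12; apply: udia_mono Ix; apply: idia_mono => y [].
    by apply: b12; apply: udia_mono Ix; apply: idia_mono => y [].
  - move=> x Sx [y [xy]]; rewrite (singletons_eq Sx xy) => /ibox_subset [a2x b2x].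
    by split; apply: dm_singleton_fst Sx _.
split => [p [->|->] | t tL t_lb]; split => x /=.
- by case.
- by move=> xI; case: (udia_ibox_subset xI).
- by case.
- by move=> xI; case: (udia_ibox_subset xI).
- by move=> tx; split;
    [apply: (t_lb a (or_introl erefl)).1 | apply: (t_lb b (or_intror erefl)).1].
- rewrite -(udia_ibox_range tL.2.1); apply: udia_mono; apply: ibox_mono => y ty.
  by split; [apply: (t_lb a (or_introl erefl)).2 | apply: (t_lb b (or_intror erefl)).2].
Qed.

Lemma DMRS_meet : DMRS R (dm_meet R a b).
Proof. by case: dm_meet_glb. Qed.

Lemma dm_meet_lbl : pair_le (dm_meet R a b) a.
Proof. by case: dm_meet_glb => _ [+ _]; apply; left. Qed.

Lemma dm_meet_lbr : pair_le (dm_meet R a b) b.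
Proof. by case: dm_meet_glb => _ [+ _]; apply; right. Qed.

Lemma dm_meet_greatest (t : set U * set U) :
  DMRS R t -> pair_le t a -> pair_le t b -> pair_le t (dm_meet R a b).
Proof. by move=> tL ta tb; case: dm_meet_glb => _ [_]; apply => // p [->|->]. Qed.

Lemma dm_le_meet (t : set U * set U) :
  DMRS R t -> pair_le t (dm_meet R a b) <-> pair_le t a /\ pair_le t b.
Proof.
move=> tL; split => [tab | [ta tb]]; last exact: dm_meet_greatest.
by split; apply: pair_le_trans tab _; [apply: dm_meet_lbl | apply: dm_meet_lbr].
Qed.

End BinaryJoinMeet.

Definition dm_cji : set U * set U -> Prop := cji (DMRS R) (@pair_le U).

Definition udia_cji (z : U) : Prop := cji (range (udia R)) (@subset U) (udia R [set z]).

Lemma dm_cjiE (j : set U * set U) : dm_cji j ->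
  (exists x, j = rs (Rimg R x)) \/ (exists z, j = rs [set z]).
Proof.
move=> [jL j_cji].
(* [j] is the join of the generators below it. *)
pose F := [set p | (exists2 x, j.1 x & p = rs (Rimg R x)) \/
                   (exists2 z, udia R [set z] `<=` j.2 & p = rs [set z])].
suff [[x _ ->]|[z _ ->]] : F j; [by left; exists x | by right; exists z |].
apply: j_cji => [p [[x _ ->]|[z _ ->]] |]; try exact: DMRS_rs.
split => //; split => [p [[x j1x ->]|[z zj ->]] | u uL u_ub].
- exact/(rs_img_le _ jL).
- split => //= t /ubox_set1 [-> Sz].
  by apply: dm_singleton_fst jL Sz _; apply/zj/udia_set1_self.
have [[Y _ eB] _] := jL.2; split => t jt.
  by apply/(rs_img_le _ uL); apply: u_ub; left; exists t.
move: jt; rewrite -eB => -[w [tw Yw]].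
have [_ wu] : pair_le (rs [set w]) u.
  by apply: u_ub; right; exists w => //; rewrite -eB; apply: udia_mono => v ->.
exact/wu/udia_set1.
Qed.

Lemma udia_cji_singleton (z : U) : singletons R z -> udia_cji z.
Proof.
move=> Sz; split; first exact: imageT.
move=> T Tr zlub; have Tz := udia_set1_self z.
rewrite (is_lub_range_udia Tr zlub) in Tz; case: Tz => Y TY Yz.
suff -> : udia R [set z] = Y by [].
have [W _ eW] := Tr Y TY; apply/seteqP; split.
  move: Yz; rewrite -eW => -[t [zt Wt]]; rewrite (singletons_eq Sz zt) in Wt.
  by apply: udia_mono => v ->.
by rewrite (is_lub_range_udia Tr zlub) => t Yt; exists Y.
Qed.

Lemma udia_cji_of_dm_cji (z : U) : dm_cji (rs [set z]) -> udia_cji z.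
Proof.
move=> zJ; have [Sz | nSz] := pselect (singletons R z); first exact: udia_cji_singleton.
split => [|T Tr zlub]; first exact: imageT.
have ez := is_lub_range_udia Tr zlub.
pose S' : set (set U * set U) := [set p | exists2 X, T X & p = (set0, X)].
have S'L : S' `<=` DMRS R.
  move=> _ [X TX ->]; have [Y _ eY] := Tr X TX.
  apply: DMRS_intro => //=.
  - by exists set0 => //; apply/seteqP; split => // x /ubox_subset.
  - by exists Y.
  - by move=> x [y [_ [w [_ []]]]].
  - move=> x Sx Xx; apply: nSz.
    have /udia_set1 xz : udia R [set z] x by rewrite ez; exists X.
    by rewrite (singletons_eq Sx xz).
suff [X TX [_ ->]] : S' (rs [set z]) by [].
apply: zJ.2 => //; split; first exact: DMRS_rs.
split => [_ [X TX ->] | u uL u_ub]; first by split => //=; rewrite ez => t Xt; exists X.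
split => /=; first by rewrite ubox_set1_eq0.
by rewrite ez => t [X TX Xt]; apply: (u_ub (set0, X) _).2 => //; exists X.
Qed.

Lemma dm_cji_of_udia_cji (z : U) : udia_cji z -> dm_cji (rs [set z]).
Proof.
move=> [_ z_cji]; split => [|S' S'L zlub]; first exact: DMRS_rs.
pose T := [set X | exists2 p, S' p & X = p.2].
have Tr : T `<=` range (udia R) by move=> _ [p /S'L [_ [? _]] ->].
have ez := is_lub_dm_sup S'L zlub.
have zTlub : is_lub (range (udia R)) (@subset U) T (udia R [set z]).
  split; first exact: imageT.
  split => [_ [p S'p ->] | Y _ Y_ub]; first exact: (zlub.2.1 p S'p).2.
  have -> : udia R [set z] = (rs [set z]).2 by [].
  by rewrite ez => t [p S'p p2t]; apply: (Y_ub p.2) => //; exists p.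
have [p S'p ep] := z_cji T Tr zTlub.
suff -> : rs [set z] = p by [].
have [pz1 pz2] := zlub.2.1 p S'p.
apply: pair_le_anti; split => //=; last by rewrite ep.
move=> t /ubox_set1 [-> Sz].
by apply: dm_singleton_fst (S'L p S'p) Sz _; rewrite -ep; apply: udia_set1_self.
Qed.

Lemma dm_cji_rs_img_min (y v : U) :
  ~ singletons R y -> R v y -> (forall v', R v' y -> Rimg R v `<=` Rimg R v') ->
  dm_cji (rs (Rimg R v)).
Proof.
move=> nSy vy v_min; split => [|S' S'L vlub]; first exact: DMRS_rs.
apply: contrapT => nS'v.
suff [+ _] : pair_le (rs (Rimg R v)) (dm_neg (rs [set y])).
  by move/(_ _ (@rs_img_self v)); apply; apply/udia_set1.
apply: vlub.2.2 => [|s S's]; first exact/DMRS_neg/DMRS_rs.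
have sL := S'L s S's; have [[X _ eX] _] := sL.
split => t /=; last by move=> _ /ubox_set1 [_ Sy].
move=> s1t /udia_set1 ty; apply: nS'v.
have s1v : s.1 v.
  by move: s1t; rewrite -eX => tX u vu; apply/tX/(v_min t ty).
suff <- : s = rs (Rimg R v) by [].
by apply: pair_le_anti; [apply: vlub.2.1 | apply/(rs_img_le _ sL)].
Qed.

Lemma rs_set1_le (b : set U * set U) (v z : U) :
  DMRS R b -> b.1 v -> R v z -> pair_le (rs [set z]) b.
Proof.
move=> bL b1v vz; have [[Y _ eY] [_ [b12 _]]] := bL.
split => t /=.
  move=> /ubox_set1 [-> Sz]; move: b1v; rewrite -eY => vY u /(singletons_eq Sz) ->.
  exact: vY.
by move/udia_set1 => tz; apply: b12; exists z; split => //; exists v.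
Qed.

Lemma rs_set1_not_le_neg (b : set U * set U) (v z : U) :
  b.1 v -> R v z -> ~ pair_le (rs [set z]) (dm_neg b).
Proof. by move=> b1v vz [_ /(_ v)]; apply => //; apply/udia_set1. Qed.

Lemma rs_set1_le_rs_img (x z : U) : R x z -> pair_le (rs [set z]) (rs (Rimg R x)).
Proof.
move=> xz; split => t /=; last by move=> /udia_set1 tz; exists z.
by move=> /ubox_set1 [-> Sz] s /(singletons_eq Sz) ->.
Qed.

Lemma exists_fst_of_not_le_neg (b : set U * set U) (w : U) : ~ singletons R w ->
  ~ pair_le (rs [set w]) (dm_neg b) -> exists2 v, R v w & b.1 v.
Proof.
move=> nSw nwb; apply: contrapT => nv; apply: nwb; split => /=; first by rewrite ubox_set1_eq0.
by move=> t /udia_set1 tw b1t; apply: nv; exists t.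
Qed.

Definition nonsingleton_cji_directed : Prop :=
  forall x y : U, ~ singletons R x -> ~ singletons R y -> udia_cji x -> udia_cji y ->
    (exists u, udia R [set x] `<=` udia R [set u] /\ udia R [set y] `<=` udia R [set u]) ->
    exists z, udia_cji z /\ udia R [set x] `<=` udia R [set z] /\
              udia R [set y] `<=` udia R [set z].

Section CompletelyDistributive.
Hypothesis CD : completely_distributive (DMRS R) (@pair_le U).

Lemma dm_meet_sup (a : set U * set U) (F : set (set U * set U)) :
  DMRS R a -> F `<=` DMRS R ->
  dm_meet R a (dm_sup F) = dm_sup [set dm_meet R a f | f in F].
Proof.
move=> aL FL.
(* Complete distributivity applied to the two rows {a} and F. *)
pose K (i : bool) := {p : set U * set U | if i then p = a else F p}.
pose x i (k : K i) := proj1_sig k.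
have xL i k : DMRS R (x i k) by case: i k => -[p /= Pp] //; [rewrite Pp | apply: FL].
have imL : [set dm_meet R a f | f in F] `<=` DMRS R.
  by move=> _ [f Ff <-]; apply: DMRS_meet => //; apply: FL.
apply: (CD (x := x) (y := fun i => if i then a else dm_sup F)
           (z := fun g => dm_meet R a (x false (g false)))) => //.
- case; last first.
    have -> : [set t | exists k, t = x false k] = F.
      apply/seteqP; split => [_ [[p Fp] ->] // | p Fp].
      by exists (exist _ p Fp : K false).
    exact: dm_sup_lub.
  split => //; split => [_ [[p /= ->] ->] | u _ u_ub]; first exact: pair_le_refl.
  by apply: u_ub; exists (exist _ a erefl : K true).
- have ->: [set t | exists i : bool, t = if i then a else dm_sup F] = [set a; dm_sup F].
    apply/seteqP; split => [_ [[] ->] | _ [->|->]];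
      by [left | right | exists true | exists false].
  by apply: dm_meet_glb => //; apply: DMRS_sup.
- move=> g; have ga : x true (g true) = a := proj2_sig (g true).
  have -> : [set t | exists i, t = x i (g i)] = [set a; x false (g false)].
    apply/seteqP; split => [_ [[] ->] | _ [->|->]];
      by [left | right | exists true | exists false].
  exact: dm_meet_glb.
- have -> : [set t | exists g, t = dm_meet R a (x false (g false))] =
            [set dm_meet R a f | f in F].
    apply/seteqP; split => [_ [g ->] | _ [f Ff <-]].
      by exists (x false (g false)) => //; apply: (proj2_sig (g false)).
    exists (fun i => if i as b return K b then exist _ a erefl else exist _ f Ff) => //.
  exact: dm_sup_lub.
Qed.

Lemma dm_cji_prime (j : set U * set U) (F : set (set U * set U)) :
  dm_cji j -> F `<=` DMRS R -> pair_le j (dm_sup F) -> exists2 f, F f & pair_le j f.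
Proof.
move=> [jL j_cji] FL jF.
have imL : [set dm_meet R j f | f in F] `<=` DMRS R.
  by move=> _ [f Ff <-]; apply: DMRS_meet => //; apply: FL.
have ej : j = dm_sup [set dm_meet R j f | f in F].
  rewrite -dm_meet_sup //; apply: pair_le_anti; last exact: dm_meet_lbl jL (DMRS_sup FL).
  by apply: dm_meet_greatest => //; [apply: DMRS_sup | apply: pair_le_refl].
have [f Ff efj] : [set dm_meet R j f | f in F] j.
  by apply: j_cji => //; rewrite {2}ej; apply: dm_sup_lub.
by exists f => //; rewrite -efj; apply: dm_meet_lbr jL (FL f Ff).
Qed.

Lemma dm_cji_join_prime (j a b : set U * set U) :
  dm_cji j -> DMRS R a -> DMRS R b -> pair_le j (dm_join R a b) -> pair_le j a \/ pair_le j b.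
Proof.
move=> jJ aL bL; rewrite dm_join_sup => /(dm_cji_prime jJ (DMRS_set2 aL bL)).
by case=> f [->|->]; [left | right].
Qed.

Lemma dm_meet_joinDr (a b c : set U * set U) : DMRS R a -> DMRS R b -> DMRS R c ->
  dm_meet R a (dm_join R b c) = dm_join R (dm_meet R a b) (dm_meet R a c).
Proof.
move=> aL bL cL.
by rewrite !dm_join_sup dm_meet_sup //; [rewrite image_setU !image_set1 | apply: DMRS_set2].
Qed.

Lemma dm_meet_neg_le_join_neg (a b : set U * set U) : DMRS R a -> DMRS R b ->
  pair_le (dm_meet R a (dm_neg a)) (dm_join R b (dm_neg b)).
Proof.
move=> aL bL; split => x /=; first by move=> [/(dm_fst_subset_snd aL) a2x /(_ a2x)].
by move=> _; have [/(dm_fst_subset_snd bL) | ] := pselect (b.1 x); [left | right].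
Qed.

Lemma Kleene_DM : is_Kleene_DM R.
Proof.
split; first exact: DMRS_bot.
split; first exact: DMRS_top.
split; first by move=> a _; split; split.
split; first exact: dm_join_lub.
split; first exact: dm_meet_glb.
split; first exact: dm_meet_joinDr.
split; first exact: DMRS_neg.
split; first by move=> a _; apply: dm_negK.
split; first by move=> a b _ _; apply: dm_neg_join.
split; first by move=> a b _ _; apply: dm_neg_meet.
exact: dm_meet_neg_le_join_neg.
Qed.

Lemma exists_rpc (a c : set U * set U) : DMRS R a -> DMRS R c -> exists x, is_rpc R a c x.
Proof.
move=> aL cL; pose F := [set y | DMRS R y /\ pair_le (dm_meet R a y) c].
have FL : F `<=` DMRS R by move=> y [].
exists (dm_sup F); split; first exact: DMRS_sup.
split => [|y yL ya]; last by apply: (dm_sup_lub FL).2.1.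
have imL : [set dm_meet R a f | f in F] `<=` DMRS R.
  by move=> _ [f [fL _] <-]; apply: DMRS_meet.
by rewrite dm_meet_sup //; apply: (dm_sup_lub imL).2.2 => // _ [f [_ fc] <-].
Qed.

Lemma dm_cji_le_rs_img (w x : U) : dm_cji (rs [set w]) -> ~ singletons R w ->
  pair_le (rs [set w]) (rs (Rimg R x)) ->
  exists2 t, R x t & udia R [set w] `<=` udia R [set t].
Proof.
move=> wJ nSw [_ wx]; pose F := [set rs [set t] | t in Rimg R x].
have FL : F `<=` DMRS R by move=> _ [t _ <-]; apply: DMRS_rs.
have [_ [t xt <-] [_ wt]] : exists2 f, F f & pair_le (rs [set w]) f.
  apply: dm_cji_prime wJ FL _; split => /=; first by rewrite ubox_set1_eq0.
  move=> s /wx [t [st xt]]; exists (rs [set t]); first by exists t.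
  exact/udia_set1.
by exists t.
Qed.

Lemma exists_min_pred (y : U) : dm_cji (rs [set y]) -> ~ singletons R y ->
  exists2 v, R v y & forall v', R v' y -> Rimg R v `<=` Rimg R v'.
Proof.
move=> yJ nSy; apply: contrapT => no_min.
(* Otherwise ({y}^▼, {y}^▲) lies below the join of the negations of the generators
   (R(v')^▼, R(v')^▲) with R v' y, and join-primeness fails at v' itself. *)
pose F := [set dm_neg (rs (Rimg R v')) | v' in [set v' | R v' y]].
have FL : F `<=` DMRS R by move=> _ [v' _ <-]; apply/DMRS_neg/DMRS_rs.
have [_ [v' v'y <-] [_ yv']] : exists2 f, F f & pair_le (rs [set y]) f.
  apply: dm_cji_prime yJ FL _; split => /=; first by rewrite ubox_set1_eq0.
  move=> t /udia_set1 ty.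
  have [v' v'y ntv'] : exists2 v', R v' y & ~ (Rimg R t `<=` Rimg R v').
    apply: contrapT => all_sub; apply: no_min; exists t => // v' v'y.
    by apply: contrapT => ntv'; apply: all_sub; exists v'.
  by exists (dm_neg (rs (Rimg R v'))); [exists v' | apply: ntv'].
by apply: (yv' v'); [apply/udia_set1 | apply: rs_img_self].
Qed.

Section Spatial.
Hypothesis sp : spatial (DMRS R) (@pair_le U).

Lemma dm_le_of_cji (a b : set U * set U) : DMRS R a -> DMRS R b ->
  (forall j, dm_cji j -> pair_le j a -> pair_le j b) -> pair_le a b.
Proof. by move=> aL bL ab; apply: (sp aL).2.2 => // j [jJ ja]; apply: ab. Qed.

Lemma dm_snd_cji (a : set U * set U) (x : U) : DMRS R a -> a.2 x ->
  exists2 j, dm_cji j /\ pair_le j a & j.2 x.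
Proof.
move=> aL a2x; have JL : [set j | dm_cji j /\ pair_le j a] `<=` DMRS R by move=> j [[jL _] _].
have : (dm_sup [set j | dm_cji j /\ pair_le j a]).2 x.
  by rewrite -(is_lub_dm_sup JL (sp aL)).
by case=> j; exists j.
Qed.

Lemma exists_udia_cji_below (t x : U) : R x t ->
  exists y, [/\ udia_cji y, udia R [set y] `<=` udia R [set t] & R x y].
Proof.
move=> xt; have [St | nSt] := pselect (singletons R t).
  by exists t; split => //; apply: udia_cji_singleton.
have [j [jJ [jt1 jt2]] j2x] := dm_snd_cji (DMRS_rs [set t]) ((udia_set1 R t x).2 xt).
case: (dm_cjiE jJ) => [[x' ej] | [y ej]]; subst j.
  by have /ubox_set1 [_ ] := jt1 x' (@rs_img_self x').
by exists y; split => //; [apply: udia_cji_of_dm_cji | apply/udia_set1].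
Qed.

Section Directed.
Hypothesis dir : nonsingleton_cji_directed.

Lemma exists_udia_cji_join (w x t : U) : ~ singletons R w -> udia_cji w -> R x t ->
  udia R [set w] `<=` udia R [set t] ->
  exists z, [/\ udia_cji z, udia R [set w] `<=` udia R [set z] & R x z].
Proof.
move=> nSw wJ xt wt; have [St | nSt] := pselect (singletons R t).
  by exists t; split => //; apply: udia_cji_singleton.
have [y [yJ yt xy]] := exists_udia_cji_below xt.
have nSy : ~ singletons R y.
  move=> Sy; apply: nSt; have /udia_set1 ty := yt _ (udia_set1_self y).
  by rewrite (singletons_eq Sy ty).
have [z [zJ [wz yz]]] := dir nSw nSy wJ yJ (ex_intro _ t (conj wt yt)).
by exists z; split => //; apply/udia_set1/yz/udia_set1.
Qed.

Lemma exists_cji_between (j a : set U * set U) (w : U) :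
  dm_cji j -> DMRS R a -> pair_le j a -> ~ pair_le j (dm_neg a) ->
  ~ singletons R w -> udia_cji w -> pair_le (rs [set w]) j ->
  exists z, [/\ udia_cji z, udia R [set w] `<=` udia R [set z],
                pair_le (rs [set z]) j & ~ pair_le (rs [set z]) (dm_neg a)].
Proof.
move=> jJ aL ja nja nSw wJ wj; case: (dm_cjiE jJ) => [[x ej] | [z ej]]; subst j; last first.
  by exists z; split => //; [apply: udia_cji_of_dm_cji | case: wj | apply: pair_le_refl].
have a1x : a.1 x by apply/(rs_img_le _ aL).
have [t xt wt] := dm_cji_le_rs_img (dm_cji_of_udia_cji wJ) nSw wj.
have [z [zJ wz xz]] := exists_udia_cji_join nSw wJ xt wt.
by exists z; split => //; [apply: rs_set1_le_rs_img | apply: rs_set1_not_le_neg a1x xz].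
Qed.

Lemma exists_cji_avoiding_negs (a b j k : set U * set U) :
  DMRS R a -> DMRS R b -> dm_cji j -> dm_cji k -> pair_le j a -> ~ pair_le j (dm_neg a) ->
  pair_le k j -> ~ pair_le k (dm_neg b) -> pair_le k (dm_neg a) ->
  exists k', [/\ dm_cji k', pair_le k k', pair_le k' j, pair_le k' b &
                 ~ pair_le k' (dm_neg a) /\ ~ pair_le k' (dm_neg b)].
Proof.
move=> aL bL jJ kJ ja nja kj nkb kna; have ka := pair_le_trans kj ja.
case: (dm_cjiE kJ) => [[x ek] | [w ek]]; subst k.
  have /(dm_fst_subset_snd aL) a2x : a.1 x by apply/(rs_img_le _ aL).
  by have := kna.1 x (@rs_img_self x).
have nSw : ~ singletons R w.
  by move=> /ubox_set1_self /ka.1 a1w; apply: rs_set1_not_le_neg a1w (Rrefl w) kna.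
have [v vw b1v] := exists_fst_of_not_le_neg nSw nkb.
have wJ := udia_cji_of_dm_cji kJ.
have [z [zJ wz zj nza]] := exists_cji_between jJ aL ja nja nSw wJ kj.
have vz : R v z by apply/udia_set1/wz/udia_set1.
exists (rs [set z]); split => //; first exact: dm_cji_of_udia_cji.
- by split => //=; rewrite ubox_set1_eq0.
- exact: rs_set1_le vz.
- by split => //; apply: rs_set1_not_le_neg b1v vz.
Qed.

Section NelsonIdentity.
Variables a b c u v w : set U * set U.
Hypotheses (aL : DMRS R a) (bL : DMRS R b) (cL : DMRS R c).
Hypothesis u_rpc : is_rpc R (dm_meet R a b) (dm_join R (dm_neg (dm_meet R a b)) c) u.
Hypothesis v_rpc : is_rpc R b (dm_join R (dm_neg b) c) v.
Hypothesis w_rpc : is_rpc R a (dm_join R (dm_neg a) v) w.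

Lemma rpc_curry_le : pair_le w u.
Proof.
have [uL _] := u_rpc; have [vL [bv _]] := v_rpc; have [wL [aw _]] := w_rpc.
have abL := DMRS_meet aL bL; have naL := DMRS_neg aL; have nbL := DMRS_neg bL.
have nabL := DMRS_neg abL.
apply: u_rpc.2.2 => //; apply: dm_le_of_cji; [exact: DMRS_meet | exact: DMRS_join |].
move=> k kJ; have kL := kJ.1.
move=> /(dm_le_meet abL wL kL) [/(dm_le_meet aL bL kL) [ka kb] kw].
have := pair_le_trans (dm_meet_greatest aL wL kL ka kw) aw.
case/(dm_cji_join_prime kJ naL vL) => [kna | kv].
  apply: pair_le_trans (dm_join_ubl nabL cL); apply: pair_le_trans kna _.
  exact/dm_neg_le/dm_meet_lbl.
have := pair_le_trans (dm_meet_greatest bL vL kL kb kv) bv.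
case/(dm_cji_join_prime kJ nbL cL) => [knb | kc].
  apply: pair_le_trans (dm_join_ubl nabL cL); apply: pair_le_trans knb _.
  exact/dm_neg_le/dm_meet_lbr.
exact: pair_le_trans kc (dm_join_ubr nabL cL).
Qed.

Lemma cji_le_rpc_meet (k : set U * set U) :
  dm_cji k -> pair_le k a -> pair_le k b -> pair_le k u ->
  [\/ pair_le k (dm_neg a), pair_le k (dm_neg b) | pair_le k c].
Proof.
move=> kJ ka kb ku; have kL := kJ.1; have [uL [abu _]] := u_rpc.
have abL := DMRS_meet aL bL; have kab := dm_meet_greatest aL bL kL ka kb.
have := pair_le_trans (dm_meet_greatest abL uL kL kab ku) abu.
case/(dm_cji_join_prime kJ (DMRS_neg abL) cL) => [|kc]; last exact: Or33.
rewrite dm_neg_meet => /(dm_cji_join_prime kJ (DMRS_neg aL) (DMRS_neg bL)).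
by case=> [kna | knb]; [apply: Or31 | apply: Or32].
Qed.

Lemma cji_le_curry_rpc (k : set U * set U) :
  dm_cji k -> pair_le k a -> pair_le k u -> ~ pair_le k (dm_neg a) -> pair_le k v.
Proof.
move=> kJ ka ku nkna; have kL := kJ.1; have [vL [_ v_max]] := v_rpc.
have nbL := DMRS_neg bL.
have nbc_ubl := dm_join_ubl nbL cL; have nbc_ubr := dm_join_ubr nbL cL.
apply: v_max => //; apply: dm_le_of_cji; [exact: DMRS_meet | exact: DMRS_join |].
move=> k2 k2J /(dm_le_meet bL kL k2J.1) [k2b k2k].
have := cji_le_rpc_meet k2J (pair_le_trans k2k ka) k2b (pair_le_trans k2k ku).
case=> [k2na | k2nb | k2c];
  [| exact: pair_le_trans k2nb nbc_ubl | exact: pair_le_trans k2c nbc_ubr].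
have [k2nb | nk2nb] := pselect (pair_le k2 (dm_neg b)).
  exact: pair_le_trans k2nb nbc_ubl.
have [k' [k'J k2k' k'k k'b [nk'na nk'nb]]] :=
  exists_cji_avoiding_negs aL bL kJ k2J ka nkna k2k nk2nb k2na.
have := cji_le_rpc_meet k'J (pair_le_trans k'k ka) k'b (pair_le_trans k'k ku).
by case=> [/nk'na | /nk'nb | k'c] //; apply: pair_le_trans k2k' (pair_le_trans k'c nbc_ubr).
Qed.

Lemma rpc_le_curry : pair_le u w.
Proof.
have [uL _] := u_rpc; have [vL _] := v_rpc; have [wL [_ w_max]] := w_rpc.
have naL := DMRS_neg aL.
apply: w_max => //; apply: dm_le_of_cji; [exact: DMRS_meet | exact: DMRS_join |].
move=> k kJ /(dm_le_meet aL uL kJ.1) [ka ku].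
have [kna | nkna] := pselect (pair_le k (dm_neg a)).
  exact: pair_le_trans kna (dm_join_ubl naL vL).
exact: pair_le_trans (cji_le_curry_rpc kJ ka ku nkna) (dm_join_ubr naL vL).
Qed.

End NelsonIdentity.

Lemma Nelson_DM_of_directed : is_Nelson_DM R.
Proof.
split; first exact: Kleene_DM.
split => [a b aL bL | a b c u v w aL bL cL u_rpc v_rpc w_rpc].
  by apply: exists_rpc => //; apply: DMRS_join => //; apply: DMRS_neg.
apply: pair_le_anti; first exact: rpc_le_curry aL bL cL u_rpc v_rpc w_rpc.
exact: rpc_curry_le aL bL cL u_rpc v_rpc w_rpc.
Qed.

End Directed.

Lemma common_cji_above_of_common_lower (x y vx vy s : U) :
  (forall v', R v' x -> Rimg R vx `<=` Rimg R v') ->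
  (forall v', R v' y -> Rimg R vy `<=` Rimg R v') ->
  Rimg R s `<=` Rimg R vx -> Rimg R s `<=` Rimg R vy ->
  exists z, udia_cji z /\ udia R [set x] `<=` udia R [set z] /\
            udia R [set y] `<=` udia R [set z].
Proof.
move=> vx_min vy_min svx svy; have [z [zJ _ sz]] := exists_udia_cji_below (Rrefl s).
exists z; split => //; split => t /udia_set1 tx; apply/udia_set1.
- exact: vx_min t tx z (svx z sz).
- exact: vy_min t tx z (svy z sz).
Qed.

Lemma cji_le_neg_of_no_common_lower (p q : U) :
  (forall s, Rimg R s `<=` Rimg R p -> Rimg R s `<=` Rimg R q -> False) ->
  forall k, dm_cji k -> pair_le k (rs (Rimg R p)) -> pair_le k (rs (Rimg R q)) ->
  pair_le k (dm_neg (rs (Rimg R p))) \/ pair_le k (dm_neg (rs (Rimg R q))).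
Proof.
move=> disj k kJ kp kq; apply: contrapT => /not_orP [nkp nkq].
case: (dm_cjiE kJ) => [[s ek] | [w ek]]; subst k.
  by apply: (disj s); [apply: kp.1 | apply: kq.1]; apply: rs_img_self.
have [Sw | nSw] := pselect (singletons R w).
  by apply: (disj w); [apply: kp.1 | apply: kq.1]; apply: ubox_set1_self.
have [vw _ vw_min] := exists_min_pred kJ nSw.
have [p' p'w p'p] := exists_fst_of_not_le_neg nSw nkp.
have [q' q'w q'q] := exists_fst_of_not_le_neg nSw nkq.
apply: (disj vw) => t vwt.
  exact: p'p t (vw_min p' p'w t vwt).
exact: q'q t (vw_min q' q'w t vwt).
Qed.

Lemma Nelson_rpc_ge (a b v : set U * set U) :
  is_Nelson_DM R -> DMRS R a -> DMRS R b -> dm_cji a -> ~ pair_le a (dm_neg a) ->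
  (forall k, dm_cji k -> pair_le k a -> pair_le k b ->
     pair_le k (dm_neg a) \/ pair_le k (dm_neg b)) ->
  is_rpc R b (dm_join R (dm_neg b) (dm_bot U)) v -> pair_le a v.
Proof.
move=> [_ [ex_rpc curry]] aL bL aJ nana ab_neg v_rpc.
have [vL _] := v_rpc; have abL := DMRS_meet aL bL.
have [u u_rpc] := ex_rpc (dm_meet R a b) (dm_bot U) abL DMRS_bot.
have [w w_rpc] := ex_rpc a v aL vL.
have au : pair_le a u.
  apply: u_rpc.2.2 => //; apply: dm_le_of_cji.
  - exact: DMRS_meet.
  - exact: DMRS_join (DMRS_neg abL) DMRS_bot.
  move=> k kJ /(dm_le_meet abL aL kJ.1) [/(dm_le_meet aL bL kJ.1) [ka kb] _].
  apply: pair_le_trans (dm_join_ubl (DMRS_neg abL) DMRS_bot).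
  by case: (ab_neg k kJ ka kb) => kn; apply: pair_le_trans kn _; apply: dm_neg_le;
    [apply: dm_meet_lbl | apply: dm_meet_lbr].
rewrite (curry a b (dm_bot U) u v w aL bL DMRS_bot u_rpc v_rpc w_rpc) in au.
have [wL [aw _]] := w_rpc.
have := pair_le_trans (dm_meet_greatest aL wL aJ.1 (pair_le_refl a) au) aw.
by case/(dm_cji_join_prime aJ (DMRS_neg aL) vL).
Qed.

Lemma directed_of_Nelson_DM : is_Nelson_DM R -> nonsingleton_cji_directed.
Proof.
move=> nelson x y nSx nSy xJ yJ [t [xt yt]]; apply: contrapT => no_z.
have [vx vxx vx_min] := exists_min_pred (dm_cji_of_udia_cji xJ) nSx.
have [vy vyy vy_min] := exists_min_pred (dm_cji_of_udia_cji yJ) nSy.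
have aL := DMRS_rs (Rimg R vy); have bL := DMRS_rs (Rimg R vx).
have [v v_rpc] := nelson.2.1 _ _ bL DMRS_bot; have [vL [bv _]] := v_rpc.
have av : pair_le (rs (Rimg R vy)) v.
  apply: (Nelson_rpc_ge nelson aL bL _ _ _ v_rpc).
  - exact: dm_cji_rs_img_min nSy vyy vy_min.
  - exact: dm_not_le_neg aL (@rs_img_self vy).
  apply: cji_le_neg_of_no_common_lower => s svy svx.
  exact: no_z (common_cji_above_of_common_lower vx_min vy_min svx svy).
have xt_le : pair_le (rs [set x]) (rs [set t]) by split => //=; rewrite ubox_set1_eq0.
have vyt : R vy t by apply/udia_set1/yt/udia_set1.
have xa := pair_le_trans xt_le (rs_set1_le aL (@rs_img_self vy) vyt).
have xb := rs_set1_le bL (@rs_img_self vx) vxx.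
have xbv := dm_meet_greatest bL vL (DMRS_rs _) xb (pair_le_trans xa av).
have [_ /(_ vx)] := pair_le_trans xbv bv.
by case=> [|/= nb1 | []]; [apply/udia_set1 | apply: nb1; apply: rs_img_self].
Qed.

End Spatial.
End CompletelyDistributive.
End Reflexive.

Unset Implicit Arguments.

Theorem mainTheorem1 (U : Type) (R : U -> U -> Prop) :
  (forall x, R x x) ->
  completely_distributive (DMRS R) (@pair_le U) ->
  spatial (DMRS R) (@pair_le U) ->
  (is_Nelson_DM R <->
   (forall x y : U, ~ singletons R x -> ~ singletons R y ->
      cji (range (udia R)) (@subset U) (udia R [set x]) ->
      cji (range (udia R)) (@subset U) (udia R [set y]) ->
      (exists u : U, udia R [set x] `<=` udia R [set u] /\
                     udia R [set y] `<=` udia R [set u]) ->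
      exists z : U, cji (range (udia R)) (@subset U) (udia R [set z]) /\
                    udia R [set x] `<=` udia R [set z] /\
                    udia R [set y] `<=` udia R [set z])).
Proof.
move=> Rrefl CD sp; split; first exact: directed_of_Nelson_DM.
exact: Nelson_DM_of_directed.
Qed.
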